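(* Let $X$ be a finite set with similarity function $S$, suppose the target clustering $\mathcal{C}^{\ast}$ satisfies stability with respect to $S$, and let $\delta_u$ be the underclustering error of the initial clustering. In the unrestricted-merge model, in any run of the interactive algorithm using the global split procedure and the unrestricted merge procedure (described below), at most $\delta_u$ impure merge requests are issued.
   Context: For nonempty $A,A'\subseteq X$, $S(A,A')$ is the average of $S(x,y)$ over $x\in A,y\in A'$. $\mathcal{C}^{\ast}=\{C^{\ast}_1,\dots,C^{\ast}_k\}$ satisfies stability w.r.t. $S$ if for all $i\neq j$, every nonempty proper $A\subset C^{\ast}_i$ and nonempty $A'\subseteq C^{\ast}_j$: $S(A,C^{\ast}_i\setminus A)>S(A,A')$. For clusterings $\mathcal{A},\mathcal{B}$, $\mathrm{dist}(\mathcal{A},\mathcal{B})=\sum_{A\in\mathcal{A}}(|\{B\in\mathcal{B}:B\cap A\neq\emptyset\}|-1)$; the underclustering error of a clustering $\mathcal{C}$ is $\mathrm{dist}(\mathcal{C}^{\ast},\mathcal{C})$. Average-linkage tree $T_{glob}$ of $X$: leaves are singletons; repeatedly merge the two current nodes $N_1,N_2$ with largest $S(N_1,N_2)$ (ties arbitrary) into parent $N_1\cup N_2$ until the root $X$ remains. Split$(Y)$ for $|Y|\ge2$: with $N$ the deepest node of $T_{glob}$ containing $Y$ and children $N_1,N_2$, output $Y\cap N_1$, $Y\cap N_2$. Process (unrestricted-merge model): starting from the initial clustering, an oracle repeatedly issues split$(C_i)$, allowed only if current cluster $C_i$ contains points of two or more target clusters, or merge$(C_i,C_j)$ for distinct current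 clusters, allowed only if some target cluster meets both. Split procedure: replace $C_i$ by the output of Split$(C_i)$. Unrestricted merge procedure: let $C'_i,C'_j$ be the output of Split$(C_i\cup C_j)$; delete $C_i,C_j$; if $\{C'_i,C'_j\}=\{C_i,C_j\}$ add $C_i\cup C_j$, otherwise add $C'_i,C'_j$. A merge request merge$(C_i,C_j)$ is pure if $C_i$ and $C_j$ are both contained in the same target cluster, and impure otherwise. *)

From HB Require Import structures.
From mathcomp Require Import all_boot all_order all_algebra.
Set Implicit Arguments. Unset Strict Implicit. Unset Printing Implicit Defensive.
Import Order.TTheory GRing.Theory Num.Theory.
Local Open Scope ring_scope.

Section Clustering.
Variables (R : realFieldType) (T : finType) (S : T -> T -> R).

Definition avgS (A B : {set T}) : R :=
  (\sum_(x in A) \sum_(y in B) S x y) / (#|A| * #|B|)%:R.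

Definition stable (Cstar : {set {set T}}) : Prop :=
  forall Ci Cj, Ci \in Cstar -> Cj \in Cstar -> Ci != Cj ->
  forall A A' : {set T}, A != set0 -> A \proper Ci ->
    A' != set0 -> A' \subset Cj ->
    avgS A (Ci :\: A) > avgS A A'.

Definition cdist (CA CB : {set {set T}}) : nat :=
  (\sum_(A in CA) (#|[set B in CB | ~~ [disjoint B & A]]| - 1))%N.

Definition singletons : {set {set T}} := [set [set x] | x : T].

Definition al_step (P : {set {set T}}) (m : {set T} * {set T})
    (P' : {set {set T}}) : Prop :=
  [/\ m.1 \in P, m.2 \in P, m.1 != m.2,
      (forall N1 N2, N1 \in P -> N2 \in P -> N1 != N2 ->
          avgS N1 N2 <= avgS m.1 m.2)
    & P' = (P :\ m.1 :\ m.2) :|: [set m.1 :|: m.2]].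

Fixpoint al_run (P : {set {set T}}) (ms : seq ({set T} * {set T})) : Prop :=
  match ms with
  | [::] => (#|P| <= 1)%N
  | m :: ms' => exists2 P', al_step P m P' & al_run P' ms'
  end.

(* ms is (the merge sequence of) an average-linkage tree T_glob of X:
   starting from singletons, repeatedly merge a pair of current nodes with
   largest average similarity (ties arbitrary) until one node remains.
   The internal nodes are the unions m.1 :|: m.2 with children m.1, m.2. *)
Definition avg_linkage_tree (ms : seq ({set T} * {set T})) : Prop :=
  al_run singletons ms.

(* Split(Y) = (Y1, Y2): N = m.1 :|: m.2 is the deepest (i.e. smallest)
   node of the tree containing Y, with children m.1, m.2. *)
Definition split_out (ms : seq ({set T} * {set T})) (Y Y1 Y2 : {set T}) : Prop :=
  exists2 m, m \in ms &
    [/\ Y \subset m.1 :|: m.2,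
        (forall m', m' \in ms -> Y \subset m'.1 :|: m'.2 ->
            #|m.1 :|: m.2| <= #|m'.1 :|: m'.2|)%N,
        Y1 = Y :&: m.1 & Y2 = Y :&: m.2].

Definition mixed (Cstar : {set {set T}}) (C : {set T}) : Prop :=
  exists Ct1 Ct2, [/\ Ct1 \in Cstar, Ct2 \in Cstar, Ct1 != Ct2,
                     ~~ [disjoint C & Ct1] & ~~ [disjoint C & Ct2]].

Definition merge_allowed (Cstar : {set {set T}}) (Ci Cj : {set T}) : Prop :=
  exists2 Ct, Ct \in Cstar & ~~ [disjoint Ci & Ct] /\ ~~ [disjoint Cj & Ct].

Definition pure_merge (Cstar : {set {set T}}) (Ci Cj : {set T}) : bool :=
  [exists Ct in Cstar, (Ci \subset Ct) && (Cj \subset Ct)].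

(* one oracle request and its effect; the nat is 1 iff the request is an
   impure merge request, 0 otherwise *)
Inductive req_step (Cstar : {set {set T}}) (ms : seq ({set T} * {set T}))
    (C : {set {set T}}) : {set {set T}} -> nat -> Prop :=
| ReqSplit Ci Y1 Y2 :
    Ci \in C -> mixed Cstar Ci -> split_out ms Ci Y1 Y2 ->
    req_step Cstar ms C ((C :\ Ci) :|: [set Y1; Y2]) 0
| ReqMerge Ci Cj Y1 Y2 :
    Ci \in C -> Cj \in C -> Ci != Cj -> merge_allowed Cstar Ci Cj ->
    split_out ms (Ci :|: Cj) Y1 Y2 ->
    req_step Cstar ms C
      (if [set Y1; Y2] == [set Ci; Cj]
       then (C :\ Ci :\ Cj) :|: [set Ci :|: Cj]
       else (C :\ Ci :\ Cj) :|: [set Y1; Y2])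
      (nat_of_bool (~~ pure_merge Cstar Ci Cj)).

Inductive req_run (Cstar : {set {set T}}) (ms : seq ({set T} * {set T}))
    : {set {set T}} -> {set {set T}} -> nat -> Prop :=
| RunNil C : req_run Cstar ms C C 0
| RunCons C C1 C2 i n :
    req_step Cstar ms C C1 i -> req_run Cstar ms C1 C2 n ->
    req_run Cstar ms C C2 (i + n).

End Clustering.

From mathcomp Require Import all_boot all_order all_algebra zify.
Set Implicit Arguments. Unset Strict Implicit. Unset Printing Implicit Defensive.
Import Order.TTheory GRing.Theory Num.Theory.

(* Stability makes every node of the average-linkage tree laminar with respect
   to the target clustering (contained in, containing, or disjoint from each
   target cluster). Along the merges this is an invariant: if the pair merged
   next were a node N1 strictly inside a target cluster A and a node N2
   disjoint from A, stability would give A minus N1 -- a union of current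
   nodes -- a strictly larger average similarity to N1 than N2, so some node
   would beat N2 as a partner of N1. Hence Split cuts a cluster meeting two
   target clusters so that no target cluster meets both halves. Therefore the
   potential dist(C*, C), the sum over target clusters A of the number of
   clusters meeting A minus one, never increases, and it drops at every impure
   merge, where two clusters meeting a common target cluster are replaced by
   pieces of which at most one meets it. *)

Section SetFacts.
Variable T : finType.
Implicit Types A B N : {set T}.

Lemma meetP A B : reflect (exists2 x, x \in A & x \in B) (~~ [disjoint A & B]).
Proof.
rewrite -setI_eq0; apply: (iffP (set0Pn _)) => [[x /setIP[]]|[x xA xB]].
  by exists x.
by exists x; rewrite inE xA.
Qed.

Lemma disjointsU B1 B2 A :
  [disjoint B1 :|: B2 & A] = [disjoint B1 & A] && [disjoint B2 & A].
Proof. by rewrite -!setI_eq0 setIUl setU_eq0. Qed.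

Lemma partition_disjoint P D B1 B2 : partition P D -> B1 \in P -> B2 \in P ->
  B1 != B2 -> [disjoint B1 & B2].
Proof. by move/partition_trivIset/trivIsetP; apply. Qed.

Definition nested A B := [|| B \subset A, A \subset B | [disjoint A & B]].

Lemma nestedU A B1 B2 : nested A B1 -> nested A B2 ->
    ~~ ((B1 \proper A) && [disjoint B2 & A]) ->
    ~~ ((B2 \proper A) && [disjoint B1 & A]) ->
  nested A (B1 :|: B2).
Proof.
rewrite /nested !properE ![[disjoint _ & A]]disjoint_sym.
have mid : (A \subset B1) || (A \subset B2) -> nested A (B1 :|: B2).
  by rewrite /nested => /subsetU ->; rewrite orbT.
case/or3P=> [s1|sA1|d1]; case/or3P=> [s2|sA2|d2] h12 h21.
- by rewrite subUset s1 s2.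
- by apply: mid; rewrite sA2 orbT.
- by apply: mid; move: h12; rewrite s1 d2 andbT /= negbK => ->.
- by apply: mid; rewrite sA1.
- by apply: mid; rewrite sA1.
- by apply: mid; rewrite sA1.
- by apply: mid; move: h21; rewrite s2 d1 andbT /= negbK => ->; rewrite orbT.
- by apply: mid; rewrite sA2 orbT.
- by rewrite disjoint_sym disjointsU ![[disjoint _ & A]]disjoint_sym d1 d2 !orbT.
Qed.

Lemma nested_meet_sub A B y : nested A B -> ~~ [disjoint B & A] ->
  y \in A -> y \notin B -> B \subset A.
Proof.
case/or3P=> [//|sAB|dAB]; last by rewrite disjoint_sym dAB.
by move=> _ /(subsetP sAB) ->.
Qed.

Lemma partition_merge P D N1 N2 : partition P D -> N1 \in P -> N2 \in P ->
  N1 != N2 -> partition ((P :\ N1 :\ N2) :|: [set N1 :|: N2]) D.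
Proof.
move=> partP N1P N2P n12; set N := N1 :|: N2.
have partP' : partition (P :\ N1 :\ N2) (D :\: N).
  by rewrite -setDDl; apply: partitionD1; [apply: partitionD1 | rewrite !inE eq_sym n12].
have N0 : N != set0.
  have /set0Pn[x xN1] := partition_neq0 partP N1P.
  by apply/set0Pn; exists x; rewrite inE xN1.
have disjND : [disjoint N & D :\: N].
  by rewrite disjoint_sym disjoints_subset setDE subsetIr.
have sND : N \subset D by rewrite subUset !(partitionS partP).
have := partitionU1 partP' N0 disjND.
by rewrite -{2}(setIidPr sND) setID setUC.
Qed.

End SetFacts.

Local Open Scope ring_scope.

Section Averages.
Variables (R : realFieldType) (T : finType) (S : T -> T -> R).
Implicit Types (L : R) (X Y : {set T}) (P : {set {set T}}).

Lemma avgS_sym X Y : (forall x y, S x y = S y x) -> avgS S X Y = avgS S Y X.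
Proof.
move=> symS; rewrite /avgS exchange_big mulnC; congr (_ / _).
by apply: eq_bigr => y _; apply: eq_bigr => x _.
Qed.

(* [excess L X Y] is [#|X| #|Y| (avgS S X Y - L)]; unlike the average, it is
   additive in [Y]. *)
Definition excess L X Y := \sum_(y in Y) (\sum_(x in X) S x y - L * #|X|%:R).

Lemma excessE L X Y :
  excess L X Y = \sum_(x in X) \sum_(y in Y) S x y - L * (#|X| * #|Y|)%:R.
Proof.
rewrite /excess sumrB sumr_const exchange_big natrM mulrA.
by rewrite [in RHS]mulr_natr.
Qed.

Lemma avgS_le_excess L X Y : X != set0 -> Y != set0 ->
  (avgS S X Y <= L) = (excess L X Y <= 0).
Proof.
move=> X0 Y0; rewrite excessE subr_le0 /avgS ler_pdivrMr //.
by rewrite ltr0n muln_gt0 !card_gt0 X0.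
Qed.

Lemma avgS_lt_excess L X Y : X != set0 -> Y != set0 ->
  (avgS S X Y < L) = (excess L X Y < 0).
Proof.
move=> X0 Y0; rewrite excessE subr_lt0 /avgS ltr_pdivrMr //.
by rewrite ltr0n muln_gt0 !card_gt0 X0.
Qed.

Lemma excess_cover L X Y P : trivIset P -> Y \subset cover P ->
  excess L X Y = \sum_(B in P) excess L X (Y :&: B).
Proof.
move=> tP sYP.
transitivity (\sum_(y in cover P | y \in Y) (\sum_(x in X) S x y - L * #|X|%:R)).
  apply: eq_bigl => y.
  by case: (boolP (y \in Y)) => [/(subsetP sYP)->|]; rewrite ?andbF.
rewrite big_trivIset_cond //; apply: eq_bigr => B _.
by apply: eq_bigl => y; rewrite inE andbC.
Qed.

Lemma avgS_le_cover L X Y P : X != set0 -> Y != set0 ->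
    trivIset P -> Y \subset cover P ->
    (forall B, B \in P -> Y :&: B != set0 -> avgS S X (Y :&: B) <= L) ->
  avgS S X Y <= L.
Proof.
move=> X0 Y0 tP sYP le_avg; rewrite avgS_le_excess // (excess_cover _ _ tP sYP).
apply: sumr_le0 => B BP; have [->|YB0] := eqVneq (Y :&: B) set0.
  by rewrite /excess big_set0.
by rewrite -avgS_le_excess // le_avg.
Qed.

Lemma avgS_lt_cover L X Y P : X != set0 -> Y != set0 ->
    trivIset P -> Y \subset cover P ->
    (forall B, B \in P -> Y :&: B != set0 -> avgS S X (Y :&: B) < L) ->
  avgS S X Y < L.
Proof.
move=> X0 Y0 tP sYP lt_avg; rewrite avgS_lt_excess // (excess_cover _ _ tP sYP).
have /set0Pn[y yY] := Y0; have /bigcupP[B0 B0P yB0] := subsetP sYP y yY.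
have YB00 : Y :&: B0 != set0 by apply/set0Pn; exists y; rewrite inE yY.
rewrite (bigD1 B0) //= addrC; apply: ltr_nwDr.
  by rewrite -avgS_lt_excess // lt_avg.
apply: sumr_le0 => B /andP[BP _]; have [->|YB0] := eqVneq (Y :&: B) set0.
  by rewrite /excess big_set0.
by rewrite -avgS_le_excess // ltW // lt_avg.
Qed.

End Averages.

Section Laminarity.
Variables (R : realFieldType) (T : finType) (S : T -> T -> R).
Variable Cstar : {set {set T}}.
Hypothesis partCstar : partition Cstar [set: T].
Hypothesis stableCstar : stable S Cstar.
Hypothesis symS : forall x y, S x y = S y x.
Implicit Types (A B N Y : {set T}) (P : {set {set T}}).

Definition laminar B := {in Cstar, forall A, nested A B}.

Definition laminar_partition P := partition P [set: T] /\ {in P, forall B, laminar B}.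

Lemma target_eq A1 A2 : A1 \in Cstar -> A2 \in Cstar ->
  ~~ [disjoint A1 & A2] -> A1 = A2.
Proof.
by move=> A1in A2in; apply: contraNeq; apply: partition_disjoint partCstar A1in A2in.
Qed.

Lemma mem_target x : exists2 A, A \in Cstar & x \in A.
Proof.
have : x \in cover Cstar by rewrite (cover_partition partCstar) inE.
by case/bigcupP=> A; exists A.
Qed.

Lemma mixedN_sub Y A : mixed Cstar Y -> A \in Cstar -> ~~ (Y \subset A).
Proof.
case=> [C1 [C2 [C1in C2in n12 m1 m2]]] Ain; apply/negP => sYA.
have toA C : C \in Cstar -> ~~ [disjoint Y & C] -> C = A.
  move=> Cin mYC; apply: target_eq Cin Ain _; rewrite disjoint_sym.
  by apply: contra mYC; apply: disjointWl.
by move: n12; rewrite (toA C1 C1in m1) (toA C2 C2in m2) eqxx.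
Qed.

Lemma block_sub_diff P N1 N A : laminar_partition P -> N1 \in P -> N \in P ->
  A \in Cstar -> N1 \subset A -> ~~ [disjoint A :\: N1 & N] -> N \subset A :\: N1.
Proof.
move=> [partP lamP] N1P NP Ain sN1A /meetP[w /setDP[wA wN1] wN].
have dN : [disjoint N & N1].
  by apply: (partition_disjoint partP) => //; apply: contraNneq wN1 => <-.
rewrite subsetD dN andbT; case/or3P: (lamP N NP A Ain) => [//|sAN|dAN].
  have /set0Pn[z zN1] := partition_neq0 partP N1P.
  by have := disjointFl dN zN1; rewrite (subsetP sAN) // (subsetP sN1A).
by rewrite (disjointFr dAN wA) in wN.
Qed.

Lemma best_partner_meets P N1 N2 A : laminar_partition P -> N1 \in P -> N2 \in P ->
    {in P, forall N, N != N1 -> avgS S N1 N <= avgS S N1 N2} ->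
    A \in Cstar -> N1 \proper A -> ~~ [disjoint N2 & A].
Proof.
move=> lamP N1P N2P best Ain N1A; have [partP _] := lamP.
apply/negP => dN2A.
have N10 := partition_neq0 partP N1P; have N20 := partition_neq0 partP N2P.
have D0 : A :\: N1 != set0 by move: N1A; rewrite properE setD_eq0 => /andP[].
have lt_avg : avgS S N1 N2 < avgS S N1 (A :\: N1).
  apply: (avgS_lt_cover N10 N20 (partition_trivIset partCstar)).
    by rewrite (cover_partition partCstar) subsetT.
  move=> B Bin N2B0.
  have nAB : A != B by apply: contraNneq N2B0 => <-; rewrite setI_eq0.
  exact: stableCstar Ain Bin nAB _ _ N10 N1A N2B0 (subsetIr _ _).
have le_avg : avgS S N1 (A :\: N1) <= avgS S N1 N2.
  apply: (avgS_le_cover N10 D0 (partition_trivIset partP)).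
    by rewrite (cover_partition partP) subsetT.
  move=> N NP; rewrite setI_eq0 => meetN.
  rewrite (setIidPr (block_sub_diff lamP N1P NP Ain (proper_sub N1A) meetN)).
  apply: best => //; apply: contraNneq meetN => ->.
  by rewrite disjoints_subset setDE subsetIr.
by have := lt_le_trans lt_avg le_avg; rewrite ltxx.
Qed.

Lemma laminar_merge P N1 N2 : laminar_partition P -> N1 \in P -> N2 \in P ->
    (forall M1 M2, M1 \in P -> M2 \in P -> M1 != M2 ->
       avgS S M1 M2 <= avgS S N1 N2) ->
  laminar (N1 :|: N2).
Proof.
move=> lamP N1P N2P top A Ain; have [_ lamB] := lamP.
apply: nestedU; rewrite ?lamB //; apply/negP => /andP[prA]; apply/negP.
  apply: (best_partner_meets lamP N1P N2P _ Ain prA) => N NP nN.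
  by apply: top; rewrite // eq_sym.
apply: (best_partner_meets lamP N2P N1P _ Ain prA) => N NP nN.
by rewrite [avgS S N2 N1]avgS_sym //; apply: top; rewrite // eq_sym.
Qed.

Lemma laminar_partition_step P m P' :
  laminar_partition P -> al_step S P m P' -> laminar_partition P'.
Proof.
move=> lamP [m1P m2P n12 top ->]; have [partP lamB] := lamP.
split; first exact: partition_merge.
move=> B /setUP[/setD1P[_ /setD1P[_ BP]]|/set1P ->]; first exact: lamB.
exact: (laminar_merge lamP m1P m2P top).
Qed.

Lemma laminar_partition_singletons : laminar_partition (singletons T).
Proof.
split.
  apply/and3P; split.
  - apply/eqP/setP => x; rewrite inE; apply/bigcupP.
    by exists [set x]; [apply: imset_f | apply: set11].
  - apply/trivIsetP => _ _ /imsetP[x _ ->] /imsetP[y _ ->] nxy.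
    by rewrite disjoints1 inE; apply: contraNneq nxy => ->.
  - by apply/imsetP => -[x _] /setP /(_ x); rewrite !inE eqxx.
move=> _ /imsetP[x _ ->] A Ain; rewrite /nested.
have [xA|xA] := boolP (x \in A); first by rewrite sub1set xA.
by rewrite disjoint_sym disjoints1 xA !orbT.
Qed.

Lemma al_run_laminar P ms : laminar_partition P -> al_run S P ms ->
  forall m, m \in ms -> [/\ [disjoint m.1 & m.2], laminar m.1 & laminar m.2].
Proof.
elim: ms P => [|m0 ms IH] P lamP //= [P' step run] m.
case/predU1P=> [->|mms]; last exact: IH _ (laminar_partition_step lamP step) run _ mms.
have [partP lamB] := lamP; case: step => m1P m2P n12 _ _.
by split; [apply: (partition_disjoint partP) | apply: lamB | apply: lamB].
Qed.

End Laminarity.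

Local Close Scope ring_scope.

Section Counting.
Variable T : finType.
Implicit Types (A B : {set T}) (C K Z : {set {set T}}).

Definition meet_count C A := #|[set B in C | ~~ [disjoint B & A]]|.

Lemma meet_count_set1 B A : meet_count [set B] A = ~~ [disjoint B & A].
Proof.
rewrite /meet_count; have [mBA|dBA] := boolP (~~ _).
  have -> : [set B' in [set B] | ~~ [disjoint B' & A]] = [set B].
    by apply/setP => B'; rewrite !inE; case: eqP => // ->; rewrite mBA.
  by rewrite cards1.
have -> : [set B' in [set B] | ~~ [disjoint B' & A]] = set0.
  by apply/setP => B'; rewrite !inE; case: eqP => // ->; exact: negbTE dBA.
by rewrite cards0.
Qed.

Lemma meet_count_set2 B1 B2 A :
  meet_count [set B1; B2] A <= ~~ [disjoint B1 & A] + ~~ [disjoint B2 & A].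
Proof.
rewrite -!meet_count_set1 /meet_count setIdE setIUl -!setIdE.
exact: leq_card_setU.
Qed.

Lemma meet_count_set2_neq B1 B2 A : B1 != B2 ->
  meet_count [set B1; B2] A = ~~ [disjoint B1 & A] + ~~ [disjoint B2 & A].
Proof.
move=> n12; rewrite -!meet_count_set1 /meet_count setIdE setIUl -!setIdE cardsU.
rewrite (_ : _ :&: _ = set0) ?cards0 ?subn0 //; apply/setP => B.
by rewrite !inE; case: eqP => // ->; rewrite (negbTE n12) andbF.
Qed.

Lemma leq_meets B1 B2 A : B1 \subset B2 ->
  ~~ [disjoint B1 & A] <= ~~ [disjoint B2 & A].
Proof.
move=> sB; have [dB2|_] := boolP [disjoint B2 & A]; last exact: leq_b1.
by rewrite (disjointWl sB dB2).
Qed.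

Lemma merge_count_le B1 B2 A : B1 != B2 ->
  ~~ [disjoint B1 :|: B2 & A] <= meet_count [set B1; B2] A.
Proof.
by move=> n12; rewrite meet_count_set2_neq // disjointsU; do 2!case: [disjoint _ & A].
Qed.

Lemma meet_countS K C A : K \subset C -> meet_count K A <= meet_count C A.
Proof. by move=> sKC; apply: subset_leq_card; rewrite !setIdE setSI. Qed.

Lemma meet_count_replace C K Z A : K \subset C ->
  meet_count (C :\: K :|: Z) A + meet_count K A <= meet_count C A + meet_count Z A.
Proof.
rewrite /meet_count !setIdE => sKC; set Q := [set B | _].
rewrite -(cardsID K (C :&: Q)) setIAC (setIidPr sKC) -setIDAC setIUl.
have := (leq_card_setU ((C :\: K) :&: Q) (Z :&: Q)).1; lia.
Qed.

Lemma meet_count_replace_le C K Z A : K \subset C ->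
  meet_count Z A <= meet_count K A -> meet_count (C :\: K :|: Z) A <= meet_count C A.
Proof. by move=> sKC; have := meet_count_replace Z A sKC; lia. Qed.

End Counting.

Section Process.
Variables (T : finType) (Cstar : {set {set T}}) (ms : seq ({set T} * {set T})).
Hypothesis partCstar : partition Cstar [set: T].
Hypothesis ms_laminar : forall m, m \in ms ->
  [/\ [disjoint m.1 & m.2], laminar Cstar m.1 & laminar Cstar m.2].
Implicit Types (A Y : {set T}) (C K Z : {set {set T}}).

Lemma cdistE C : cdist Cstar C = \sum_(A in Cstar) (meet_count C A - 1).
Proof. by []. Qed.

Lemma cdist_replace_le C K Z : K \subset C ->
    (forall A, A \in Cstar -> meet_count Z A <= meet_count K A) ->
  cdist Cstar (C :\: K :|: Z) <= cdist Cstar C.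
Proof.
move=> sKC le_ZK; rewrite !cdistE; apply: leq_sum => A Ain; apply: leq_sub2r.
exact: meet_count_replace_le (le_ZK A Ain).
Qed.

Lemma cdist_replace_lt C K Z A0 : K \subset C ->
    (forall A, A \in Cstar -> meet_count Z A <= meet_count K A) ->
    A0 \in Cstar -> meet_count Z A0 < meet_count K A0 -> 1 < meet_count K A0 ->
  cdist Cstar (C :\: K :|: Z) < cdist Cstar C.
Proof.
move=> sKC le_ZK A0in lt_ZK gt1.
rewrite !cdistE (bigD1 A0) //= [X in _ < X](bigD1 A0) //=.
have le_rest : \sum_(A in Cstar | A != A0) (meet_count (C :\: K :|: Z) A - 1)
    <= \sum_(A in Cstar | A != A0) (meet_count C A - 1).
  apply: leq_sum => A /andP[Ain _]; apply: leq_sub2r.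
  exact: meet_count_replace_le (le_ZK A Ain).
rewrite -addSn; apply: leq_add le_rest.
by have := meet_count_replace Z A0 sKC; have := meet_countS A0 sKC; lia.
Qed.

Lemma split_meets_one Y Y1 Y2 A : mixed Cstar Y -> split_out ms Y Y1 Y2 ->
  A \in Cstar -> [disjoint Y1 & A] || [disjoint Y2 & A].
Proof.
move=> mixY [m mms [sYm _ -> ->]] Ain; have [d12 lam1 lam2] := ms_laminar mms.
case: (boolP [disjoint _ & A]) => //= /meetP[x /setIP[xY xm1] xA].
apply/negPn/negP => /meetP[y /setIP[yY ym2] yA].
have sm1 : m.1 \subset A.
  apply: (nested_meet_sub (lam1 A Ain) _ yA); last by rewrite (disjointFl d12 ym2).
  by apply/meetP; exists x.
have sm2 : m.2 \subset A.
  apply: (nested_meet_sub (lam2 A Ain) _ xA); last by rewrite (disjointFr d12 xm1).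
  by apply/meetP; exists y.
have := mixedN_sub partCstar mixY Ain.
by rewrite (subset_trans sYm) // subUset sm1 sm2.
Qed.

Lemma meet_count_split Y Y1 Y2 A : mixed Cstar Y -> split_out ms Y Y1 Y2 ->
  A \in Cstar -> meet_count [set Y1; Y2] A <= ~~ [disjoint Y & A].
Proof.
move=> mixY spl Ain; apply: leq_trans (meet_count_set2 _ _ _) _.
have [sY1 sY2] : Y1 \subset Y /\ Y2 \subset Y.
  by case: spl => m _ [_ _ -> ->]; rewrite !subsetIl.
have := leq_meets A sY1; have := leq_meets A sY2.
by case/orP: (split_meets_one mixY spl Ain) => ->; rewrite ?addn0.
Qed.

Lemma impure_mixed Ci Cj : merge_allowed Cstar Ci Cj -> ~~ pure_merge Cstar Ci Cj ->
  mixed Cstar (Ci :|: Cj).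
Proof.
move=> [A Ain [mi mj]] impure.
have /subsetPn[y yU yA] : ~~ (Ci :|: Cj \subset A).
  apply: contra impure; rewrite subUset => sA; apply/existsP; exists A.
  by rewrite Ain sA.
have [B Bin yB] := mem_target partCstar y.
exists A, B; split => //.
- by apply: contraNneq yA => ->.
- by apply: contra mi; apply: disjointWl; apply: subsetUl.
- by apply/meetP; exists y.
Qed.

Lemma pure_merge_count Ci Cj Y1 Y2 A : merge_allowed Cstar Ci Cj ->
    pure_merge Cstar Ci Cj -> Ci != Cj -> split_out ms (Ci :|: Cj) Y1 Y2 ->
    A \in Cstar ->
  meet_count [set Y1; Y2] A <= meet_count [set Ci; Cj] A.
Proof.
move=> [A0 A0in [mi mj]] /existsP[Ct /andP[Ctin /andP[sCi sCj]]] nij spl Ain.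
have eCt : Ct = A0.
  apply: (target_eq partCstar Ctin A0in).
  by apply: contra mi; apply: disjointWl.
have sY : Y1 :|: Y2 \subset A0.
  case: spl => m _ [_ _ -> ->]; rewrite -setIUr -eCt.
  by apply: subset_trans (subsetIl _ _) _; rewrite subUset sCi.
apply: leq_trans (meet_count_set2 _ _ _) _.
have [-> | nA] := eqVneq A A0.
  by rewrite meet_count_set2_neq // mi mj; apply: leq_add (leq_b1 _) (leq_b1 _).
have dA : [disjoint A0 & A].
  by apply: partition_disjoint partCstar A0in Ain _; rewrite eq_sym.
by move: sY; rewrite subUset => /andP[/disjointWl/(_ dA) -> /disjointWl/(_ dA) ->].
Qed.

Lemma merge_cdist C Ci Cj Z : Ci \in C -> Cj \in C -> Ci != Cj ->
    merge_allowed Cstar Ci Cj ->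
    (forall A, A \in Cstar -> meet_count Z A <= ~~ [disjoint Ci :|: Cj & A]) ->
  1 + cdist Cstar (C :\: [set Ci; Cj] :|: Z) <= cdist Cstar C.
Proof.
move=> Ciin Cjin nij [A0 A0in [mi mj]] le_Z; rewrite add1n.
have K2 : meet_count [set Ci; Cj] A0 = 2 by rewrite meet_count_set2_neq // mi mj.
apply: (cdist_replace_lt (A0 := A0)) => //.
- by rewrite subUset !sub1set Ciin Cjin.
- by move=> A Ain; apply: leq_trans (le_Z A Ain) (merge_count_le A nij).
- by rewrite K2 ltnS; apply: leq_trans (le_Z A0 A0in) (leq_b1 _).
- by rewrite K2.
Qed.

Lemma req_step_cdist C C' i : req_step Cstar ms C C' i ->
  i + cdist Cstar C' <= cdist Cstar C.
Proof.
case=> [Ci Y1 Y2 Ciin mixCi spl | Ci Cj Y1 Y2 Ciin Cjin nij allowed spl].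
  rewrite add0n; apply: cdist_replace_le; first by rewrite sub1set.
  by move=> A Ain; rewrite meet_count_set1; apply: meet_count_split.
rewrite setDDl; have le_i := leq_b1 (~~ pure_merge Cstar Ci Cj).
case: ifP => _.
  apply: leq_trans (leq_add le_i (leqnn _)) (merge_cdist Ciin Cjin nij allowed _).
  by move=> A Ain; rewrite meet_count_set1.
have [pure | impure] := boolP (pure_merge Cstar Ci Cj).
  rewrite add0n; apply: cdist_replace_le; first by rewrite subUset !sub1set Ciin Cjin.
  by move=> A Ain; apply: pure_merge_count.
apply: (merge_cdist Ciin Cjin nij allowed) => A Ain.
exact: meet_count_split (impure_mixed allowed impure) spl Ain.
Qed.

Lemma req_run_cdist C C' n : req_run Cstar ms C C' n -> n <= cdist Cstar C.
Proof.
elim=> // D D1 D2 i k step _ IH.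
by apply: leq_trans (req_step_cdist step); rewrite leq_add2l.
Qed.

End Process.

Theorem lemma23 (R : realFieldType) (T : finType) (S : T -> T -> R)
    (Cstar C0 : {set {set T}}) (ms : seq ({set T} * {set T}))
    (Cfin : {set {set T}}) (n : nat) :
  (forall x y, S x y = S y x) ->
  partition Cstar [set: T] ->
  stable S Cstar ->
  partition C0 [set: T] ->
  avg_linkage_tree S ms ->
  req_run Cstar ms C0 Cfin n ->
  (n <= cdist Cstar C0)%N.
Proof.
(* The initial clustering need not be a partition. *)
move=> symS partCstar stableCstar _ tree run.
have ms_laminar := al_run_laminar partCstar stableCstar symS
  (laminar_partition_singletons Cstar) tree.
exact: (req_run_cdist partCstar ms_laminar run).
Qed.
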